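(* Let $\mathcal{X}=\mathbb{R}^{d_\mathcal{X}}$, $\Theta=\mathbb{R}^{d_\Theta}$, $\beta>0$, observations $x^o_1,\dots,x^o_n$, and Gaussian prior $\pi(\theta)\propto\mathcal{N}(\theta;\mu,\Sigma)$ with $\Sigma$ positive definite. Suppose: (A1) $w:\mathcal{X}\to\mathbb{R}_+$ is twice continuously differentiable with $\sup_xw(x)<\infty$ and $\sup_x\|\nabla_xw(x)\|_2<\infty$; (A3) $q(x\mid\theta)\propto\exp(T(x)^\top\theta+b(x))$ with $T:\mathcal{X}\to\mathbb{R}^{d_\Theta}$, $b:\mathcal{X}\to\mathbb{R}$ twice differentiable and $q(\cdot\mid\theta)$ a probability density for each $\theta$; (A5) there exist $C,C'<\infty$ such that for all $x\in\mathcal{X}$, $$\max\Big\{\big(\|\nabla_xT(x)\|_F\|\nabla_xb(x)\|_2\big)^{1/2},\ \|\nabla_x^2T(x)\|_F^{1/2},\ \|\nabla_xT(x)\|_F\Big\}\le C\,w(x)^{-1},\qquad \|\nabla_xT(x)\|_F\le C'\|\nabla_xw(x)^2\|_2^{-1}.$$ Fix $j\in\{1,\dots,n\}$ and for $x_j^c\in\mathcal{X}$ let $x^c_{1:n}$ be the dataset obtained from $x^o_{1:n}$ by replacing $x_j^o$ with $x_j^c$. Then $$\sup_{x_j^c\in\mathbb{R}^{d_\mathcal{X}}}\mathrm{KL}\Big(\pi_{\mathrm{NSM}}(\cdot\mid x^o_{1:n})\,\Big\|\,\pi_{\mathrm{NSM}}(\cdot\mid x^c_{1:n})\Big)<\i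nfty.$$
   Context: $\nabla_xT(x)\in\mathbb{R}^{d_\Theta\times d_\mathcal{X}}$ has entries $\partial T_k/\partial x_j$; $\nabla_x^2T(x)$ is the array of all second derivatives $\partial^2T_k/\partial x_j\partial x_l$; $\|\cdot\|_F$ is the Frobenius (square root of sum of squared entries) norm; $\nabla_xw(x)^2$ is the gradient of $x\mapsto w(x)^2$; $1/0=\infty$. For any dataset $y_{1:n}$, the NSM-Bayes posterior is $\pi_{\mathrm{NSM}}(\theta\mid y_{1:n})\propto\exp(-\beta n\mathcal{L}_{\mathrm{NSM}}(\theta;y_{1:n}))\pi(\theta)$ with $$\mathcal{L}_{\mathrm{NSM}}(\theta;y_{1:n})=\frac1n\sum_{i=1}^n\Big[w(y_i)^2\|\nabla_x\log q(y_i\mid\theta)\|_2^2+2(\nabla_xw(y_i)^2)^\top\nabla_x\log q(y_i\mid\theta)+2w(y_i)^2\mathrm{Tr}\,\nabla_x^2\log q(y_i\mid\theta)\Big].$$ Under (A3) and the Gaussian prior this posterior is Gaussian, $\mathcal{N}(\theta;\mu_n,\Sigma_n)$, with $\Sigma_n^{-1}=\Sigma^{-1}+2\beta\sum_i w(y_i)^2\nabla_xT(y_i)\nabla_xT(y_i)^\top$ and $\mu_n=\Sigma_n(\Sigma^{-1}\mu-2\beta\sum_i[w(y_i)^2\nabla_xT(y_i)\nabla_xb(y_i)+d(y_i)])$, where $d(y)_k=\sum_{j}\partial_{x_j}(w(y)^2\partial T_k(y)/\partial x_j)$. *)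

From mathcomp Require Import all_boot all_order all_algebra.
From mathcomp Require Import all_classical all_reals all_analysis.
Import Order.TTheory GRing.Theory Num.Theory.
Import numFieldTopology.Exports numFieldNormedType.Exports.

Set Implicit Arguments.
Unset Strict Implicit.
Unset Printing Implicit Defensive.

Local Open Scope ring_scope.

Section NSM.
Variable R : realType.

(* ---------- Lebesgue integration over R^d ('rV[R]_d) ----------
   There is no d-dimensional Lebesgue measure in the library; the integral
   over R^d is the iterated one-dimensional Lebesgue integral (Fubini). *)
Fixpoint iint (d : nat) : ('rV[R]_d -> \bar R) -> \bar R :=
 match d with
 | 0 => fun f => f 0
 | d'.+1 => fun f : 'rV[R]_d'.+1 -> \bar R =>
    (\int[@lebesgue_measure R]_t
       @iint d' (fun v : 'rV[R]_d' => f (row_mx (const_mx (t : R) : 'rV[R]_1) v)))%E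
 end.

Definition partial (d : nat) (j : 'I_d) (f : 'rV[R]_d -> R) (x : 'rV[R]_d) : R :=
  'D_(delta_mx 0 j) f x.

Definition grad_norm (d : nat) (f : 'rV[R]_d -> R) (x : 'rV[R]_d) : R :=
  Num.sqrt (\sum_(j < d) partial j f x ^+ 2).

Definition laplacian (d : nat) (f : 'rV[R]_d -> R) (x : 'rV[R]_d) : R :=
  \sum_(j < d) partial j (partial j f) x.

Definition twice_diff (d : nat) (f : 'rV[R]_d -> R) : Prop :=
  (forall x, differentiable f x) /\
  (forall (j : 'I_d) x, differentiable (partial j f) x).

Definition C2 (d : nat) (f : 'rV[R]_d -> R) : Prop :=
  twice_diff f /\
  (forall (j l : 'I_d), continuous (fun x : 'rV[R]_d => partial l (partial j f) x)).

Definition Tcomp (dX dT : nat) (T : 'rV[R]_dX -> 'rV[R]_dT) (k : 'I_dT)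
  : 'rV[R]_dX -> R := fun x => T x 0 k.

Definition frob_gradT (dX dT : nat) (T : 'rV[R]_dX -> 'rV[R]_dT) (x : 'rV[R]_dX) : R :=
  Num.sqrt (\sum_(k < dT) \sum_(l < dX) partial l (Tcomp T k) x ^+ 2).

Definition frob_hessT (dX dT : nat) (T : 'rV[R]_dX -> 'rV[R]_dT) (x : 'rV[R]_dX) : R :=
  Num.sqrt (\sum_(k < dT) \sum_(l < dX) \sum_(m < dX)
              partial m (partial l (Tcomp T k)) x ^+ 2).

Definition natpar (dX dT : nat) (T : 'rV[R]_dX -> 'rV[R]_dT) (b : 'rV[R]_dX -> R)
  (theta : 'rV[R]_dT) (x : 'rV[R]_dX) : R :=
  \sum_(k < dT) T x 0 k * theta 0 k + b x.

Definition qnorm (dX dT : nat) (T : 'rV[R]_dX -> 'rV[R]_dT) (b : 'rV[R]_dX -> R)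
  (theta : 'rV[R]_dT) : \bar R :=
  iint (fun x => (expR (natpar T b theta x))%:E).

Definition logq (dX dT : nat) (T : 'rV[R]_dX -> 'rV[R]_dT) (b : 'rV[R]_dX -> R)
  (theta : 'rV[R]_dT) (x : 'rV[R]_dX) : R :=
  natpar T b theta x - ln (fine (qnorm T b theta)).

Definition nsm_term (dX dT : nat) (w : 'rV[R]_dX -> R)
  (T : 'rV[R]_dX -> 'rV[R]_dT) (b : 'rV[R]_dX -> R)
  (theta : 'rV[R]_dT) (y : 'rV[R]_dX) : R :=
  let lq := logq T b theta in
  let w2 := fun x => w x ^+ 2 in
  w y ^+ 2 * grad_norm lq y ^+ 2
  + 2 * (\sum_(j < dX) partial j w2 y * partial j lq y)
  + 2 * w y ^+ 2 * laplacian lq y.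

Definition L_NSM (n dX dT : nat) (w : 'rV[R]_dX -> R)
  (T : 'rV[R]_dX -> 'rV[R]_dT) (b : 'rV[R]_dX -> R)
  (theta : 'rV[R]_dT) (ys : 'I_n -> 'rV[R]_dX) : R :=
  n%:R^-1 * \sum_(i < n) nsm_term w T b theta (ys i).

Definition posdef (d : nat) (S : 'M[R]_d) : Prop :=
  S^T = S /\ (forall v : 'rV[R]_d, v != 0 -> 0 < (v *m S *m v^T) 0 0).

Definition gauss_pdf (d : nat) (mu : 'rV[R]_d) (S : 'M[R]_d) (theta : 'rV[R]_d) : R :=
  (Num.sqrt ((2 * pi) ^+ d * \det S))^-1 *
  expR (- 2^-1 * ((theta - mu) *m invmx S *m (theta - mu)^T) 0 0).

Definition post_unnorm (n dX dT : nat) (beta : R) (mu : 'rV[R]_dT) (S : 'M[R]_dT)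
  (w : 'rV[R]_dX -> R) (T : 'rV[R]_dX -> 'rV[R]_dT) (b : 'rV[R]_dX -> R)
  (ys : 'I_n -> 'rV[R]_dX) (theta : 'rV[R]_dT) : R :=
  expR (- (beta * n%:R * L_NSM w T b theta ys)) * gauss_pdf mu S theta.

Definition pi_NSM (n dX dT : nat) (beta : R) (mu : 'rV[R]_dT) (S : 'M[R]_dT)
  (w : 'rV[R]_dX -> R) (T : 'rV[R]_dX -> 'rV[R]_dT) (b : 'rV[R]_dX -> R)
  (ys : 'I_n -> 'rV[R]_dX) (theta : 'rV[R]_dT) : R :=
  post_unnorm beta mu S w T b ys theta /
  fine (iint (fun th => (post_unnorm beta mu S w T b ys th)%:E)).

Definition KL (d : nat) (p q : 'rV[R]_d -> R) : \bar R :=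
  iint (fun th => (p th * ln (p th / q th))%:E).

Definition replace_at (n dX : nat) (xs : 'I_n -> 'rV[R]_dX) (j : 'I_n)
  (xc : 'rV[R]_dX) : 'I_n -> 'rV[R]_dX :=
  fun i => if i == j then xc else xs i.

End NSM.

From mathcomp Require Import all_boot all_order all_algebra.
From mathcomp Require Import all_classical all_reals all_analysis.
From mathcomp Require Import ring lra.
Import Order.TTheory GRing.Theory Num.Theory.
Import numFieldTopology.Exports numFieldNormedType.Exports.
Local Open Scope ring_scope.

(** For the exponential family (A3) the NSM loss at a data point [y] is a
  quadratic polynomial in [theta] whose quadratic part
  [w(y)^2 sum_j (sum_k theta_k d_j T_k(y))^2] is nonnegative, and (A5) bounds
  all its coefficients uniformly in [y]: the quadratic part by
  [dX dT C^2 |theta|^2], the linear part by a constant times [sum_k |theta_k|].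
  After dividing out a [theta]-independent factor, every NSM posterior is thus
  squeezed, whatever the data, between two fixed Gaussian envelopes
  [B exp(-r' |theta|^2)] and [A exp(-r |theta|^2)], and so are the normalisers.
  Replacing one observation changes the log-density ratio by at most a
  quadratic in [|theta|], and integrating it against the Gaussian envelope of
  the first posterior bounds the KL divergence independently of the new
  observation. *)

Section NSM_posterior_stability.
Set Implicit Arguments.
Unset Strict Implicit.
Unset Printing Implicit Defensive.
Variable R : realType.

Section real_inequalities.

Lemma ler_term_sum n (F : 'I_n -> R) i :
  (forall k, 0 <= F k) -> F i <= \sum_(k < n) F k.
Proof. by move=> F0; rewrite (bigD1 i) //= lerDl sumr_ge0. Qed.

Lemma normr_le_sqrt (x S : R) : x ^+ 2 <= S -> `|x| <= Num.sqrt S.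
Proof. by move=> h; rewrite -sqrtr_sqr; apply: ler_wsqrtr. Qed.

Lemma sqr_sum_le n (x : 'I_n -> R) :
  (\sum_(i < n) x i) ^+ 2 <= n%:R * \sum_(i < n) x i ^+ 2.
Proof.
elim: n x => [|n IH] x; first by rewrite !big_ord0 expr0n /= mul0r.
rewrite !big_ord_recr /= -natr1.
set S := \sum_(i < n) _; set Q := \sum_(i < n) _; set y := x ord_max.
have IHx : S ^+ 2 <= n%:R * Q by exact: IH.
have Q0 : 0 <= Q by apply: sumr_ge0 => i _; exact: sqr_ge0.
have [n0|n_gt0] := posnP n.
  have S0 : S = 0 by move: IHx; rewrite n0 mul0r; nra.
  by rewrite n0 S0; nra.
have nR_gt0 : 0 < n%:R :> R by rewrite ltr0n.
(* by induction [n Q >= S^2], so [n (Q + n y^2 - 2 S y) >= (S - n y)^2] *)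
have : 0 <= n%:R * (Q + n%:R * y ^+ 2 - 2 * S * y).
  by have := sqr_ge0 (S - n%:R * y); nra.
rewrite pmulr_rge0 //; nra.
Qed.

Lemma young_norm (a e x : R) : 0 <= a -> 0 < e ->
  a * `|x| <= e * x ^+ 2 + a ^+ 2 / e.
Proof.
move=> a0 e0.
have h : 0 <= e * (`|x| - a / e / 2) ^+ 2 by rewrite mulr_ge0 ?sqr_ge0 ?ltW.
have ha : 0 <= a ^+ 2 / e by rewrite divr_ge0 ?sqr_ge0 ?ltW.
have : e * (`|x| - a / e / 2) ^+ 2 = e * x ^+ 2 - a * `|x| + a ^+ 2 / e / 4.
  by rewrite -[x ^+ 2]real_normK ?num_real //; field; rewrite gt_eqF.
lra.
Qed.

Lemma sqrt_le_div_sqr (X c w : R) : 0 <= X -> 0 < w ->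
  Num.sqrt X <= c / w -> w ^+ 2 * X <= c ^+ 2.
Proof.
move=> X0 w0 h.
have ws : w * Num.sqrt X <= c by rewrite mulrC -ler_pdivlMr.
have ws0 : 0 <= w * Num.sqrt X by rewrite mulr_ge0 ?sqrtr_ge0 ?ltW.
rewrite -(sqr_sqrtr X0) -exprMn ler_sqr ?nnegrE //; exact: le_trans ws0 ws.
Qed.

Lemma mulr_expR_le (r N : R) : 0 < r -> N * expR (- (r * N)) <= r^-1.
Proof.
move=> r0; rewrite expRN ler_pdivrMr ?expR_gt0 // ler_pdivlMl //.
by have := expR_ge1Dx (r * N); lra.
Qed.

Lemma mul_le_expR_tail (p L a b N r P0 : R) :
  0 <= p -> p <= P0 * expR (- (r * N)) -> L <= a * N + b ->
  0 <= a -> 0 <= N -> 0 < r ->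
  p * L <= P0 * (2 * a / r + `|b|) * expR (- (r / 2 * N)).
Proof.
move=> p0 hp hL a0 N0 r0.
set E := expR (- (r / 2 * N)).
have E0 : 0 < E := expR_gt0 _.
have EE : expR (- (r * N)) = E * E by rewrite -expRD; congr expR; field.
have E1 : E <= 1 by rewrite -expR0 ler_expR oppr_le0 mulr_ge0 // divr_ge0 // ltW.
have NE : N * E <= 2 / r.
  by rewrite -[2 / r]invf_div; apply: mulr_expR_le; rewrite divr_gt0.
have P00 : 0 <= P0 by move: (le_trans p0 hp); rewrite EE pmulr_lge0 ?mulr_gt0.
have s0 : 0 <= a * N + `|b| by rewrite addr_ge0 ?mulr_ge0.
have h1 : p * L <= P0 * E * (E * (a * N + `|b|)).
  have -> : P0 * E * (E * (a * N + `|b|)) = P0 * (E * E) * (a * N + `|b|) by ring.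
  rewrite -EE; apply: le_trans (ler_wpM2r s0 hp).
  by rewrite ler_wpM2l // (le_trans hL) // lerD2l ler_norm.
have h2 : E * (a * N + `|b|) <= 2 * a / r + `|b|.
  have := ler_wpM2l a0 NE; have := ler_wpM2r (normr_ge0 b) E1.
  have -> : 2 * a / r = a * (2 / r) by rewrite mulrAC mulrC.
  nra.
apply: le_trans h1 _; rewrite [leRHS]mulrAC.
by apply: ler_wpM2l; [exact: mulr_ge0 P00 (ltW E0)|exact: h2].
Qed.

End real_inequalities.

Section square_norm.
Local Open Scope classical_set_scope.
Variable d : nat.
Implicit Types u v : 'rV[R]_d.

Definition sqnorm v : R := \sum_(k < d) v 0 k ^+ 2.

Lemma sqnorm_ge0 v : 0 <= sqnorm v.
Proof. by apply: sumr_ge0 => k _; exact: sqr_ge0. Qed.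

Lemma sqnorm0 : sqnorm 0 = 0.
Proof. by rewrite /sqnorm big1 // => k _; rewrite mxE expr0n. Qed.

Lemma sqnorm_eq0 v : sqnorm v = 0 -> v = 0.
Proof.
move=> /eqP; rewrite psumr_eq0 => [/allP v0|k _]; last exact: sqr_ge0.
by apply/rowP => k; move: (v0 k (mem_index_enum k)); rewrite /= sqrf_eq0 mxE => /eqP.
Qed.

Lemma sqnormZ (a : R) v : sqnorm (a *: v) = a ^+ 2 * sqnorm v.
Proof. by rewrite /sqnorm mulr_sumr; apply: eq_bigr => k _; rewrite mxE exprMn. Qed.

Lemma sqr_coord_le_sqnorm v k : v 0 k ^+ 2 <= sqnorm v.
Proof. exact: (ler_term_sum (F := fun k => v 0 k ^+ 2) k (fun _ => sqr_ge0 _)). Qed.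

Lemma sqnormN v : sqnorm (- v) = sqnorm v.
Proof. by apply: eq_bigr => k _; rewrite mxE sqrrN. Qed.

Lemma sqnormB_le u v : sqnorm (u - v) <= 2 * sqnorm u + 2 * sqnorm v.
Proof.
rewrite /sqnorm !mulr_sumr -big_split /=; apply: ler_sum => k _; rewrite !mxE.
by have := sqr_ge0 (u 0 k + v 0 k); nra.
Qed.

Lemma sqnorm_le_sqnormB u v : sqnorm u <= 2 * sqnorm (u - v) + 2 * sqnorm v.
Proof. by have := sqnormB_le (u - v) (- v); rewrite opprK subrK sqnormN. Qed.

Lemma young_sum_norm v (a e : R) : 0 <= a -> 0 < e ->
  a * \sum_(k < d) `|v 0 k| <= e * sqnorm v + d%:R * (a ^+ 2 / e).
Proof.
move=> a0 e0.
have -> : d%:R * (a ^+ 2 / e) = \sum_(k < d) (a ^+ 2 / e).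
  by rewrite sumr_const card_ord mulr_natl.
rewrite /sqnorm !mulr_sumr -big_split /=.
by apply: ler_sum => k _; exact: young_norm.
Qed.

Lemma continuous_sum m (F : 'I_m -> 'rV[R]_d -> R) :
  (forall i, continuous (F i)) -> continuous (fun v => \sum_(i < m) F i v).
Proof.
move=> cF; rewrite (_ : (fun v => _) = \sum_(i < m) F i); last first.
  by apply/funext => v; rewrite fct_sumE.
apply: (big_ind (fun f => continuous f)) => [x|f g cf cg x|i _].
- exact: cst_continuous.
- by apply: continuousD; [exact: cf|exact: cg].
- exact: cF.
Qed.

Lemma continuous_sqnorm : continuous sqnorm.
Proof.
apply: continuous_sum => k x.
by rewrite (_ : (fun v => _) = (fun v => v 0 k) \* (fun v => v 0 k));
  [apply: continuousM; exact: coord_continuous|apply/funext => v; rewrite expr2].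
Qed.

Lemma compact_sqnorm_sphere : compact [set v | sqnorm v = 1].
Proof.
pose cube := [set v : 'rV[R]_d | forall k, `[-1, 1]%classic (v ord0 k)].
have cube_compact : compact cube.
  exact: (@rV_compact R d (fun=> `[-1, 1]%classic) (fun=> @segment_compact R (-1) 1)).
apply: (subclosed_compact _ cube_compact).
  rewrite (_ : [set v | _] = sqnorm @^-1` [set x | x = 1]) //.
  by apply: preimage_closed; [move=> x _; exact: continuous_sqnorm|exact: closed_eq].
move=> v /= v1 k; rewrite /= in_itv /= -ler_norml -(ler_pXn2r (n := 2)) ?nnegrE //.
by rewrite expr1n real_normK ?num_real // -v1 sqr_coord_le_sqnorm.
Qed.

End square_norm.

Section quadratic_form.
Variable d : nat.
Implicit Types (M : 'M[R]_d) (v : 'rV[R]_d).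

Definition qform M v : R := (v *m M *m v^T) 0 0.

Lemma qformE M v : qform M v = \sum_(j < d) \sum_(i < d) v 0 i * M i j * v 0 j.
Proof. by rewrite /qform mxE; apply: eq_bigr => j _; rewrite !mxE mulr_suml. Qed.

Lemma qformZ M (a : R) v : qform M (a *: v) = a ^+ 2 * qform M v.
Proof.
rewrite !qformE mulr_sumr; apply: eq_bigr => j _; rewrite mulr_sumr.
by apply: eq_bigr => i _; rewrite !mxE; ring.
Qed.

Lemma continuous_qform M : continuous (qform M).
Proof.
rewrite (_ : qform M = fun v => \sum_(j < d) \sum_(i < d) v 0 i * M i j * v 0 j);
  last by apply/funext => v; rewrite qformE.
apply: continuous_sum => j; apply: continuous_sum => i x.
rewrite (_ : (fun v => _) = (fun v => v 0 i) \* (fun=> M i j) \* (fun v => v 0 j)) //.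
apply: continuousM; last exact: coord_continuous.
by apply: continuousM; [exact: coord_continuous|exact: cst_continuous].
Qed.

Lemma qform_le_sqnorm M v :
  qform M v <= (\sum_(j < d) \sum_(i < d) `|M i j|) * sqnorm v.
Proof.
rewrite qformE mulr_suml; apply: ler_sum => j _; rewrite mulr_suml.
apply: ler_sum => i _; apply: le_trans (ler_norm _) _.
have hi := sqr_coord_le_sqnorm v i; have hj := sqr_coord_le_sqnorm v j.
rewrite -[v 0 i ^+ 2]real_normK ?num_real // in hi.
rewrite -[v 0 j ^+ 2]real_normK ?num_real // in hj.
have vij : `|v 0 i| * `|v 0 j| <= sqnorm v.
  by have := sqr_ge0 (`|v 0 i| - `|v 0 j|); nra.
by rewrite !normrM mulrAC mulrC; apply: ler_wpM2l.
Qed.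

Lemma qform_ge_sqnorm M : (forall v, v != 0 -> 0 < qform M v) ->
  exists2 lam, 0 < lam & forall v, lam * sqnorm v <= qform M v.
Proof.
move=> M_pd; have [d0|d_gt0] := posnP d.
  have no_index (i : 'I_d) : False by have := ltn_ord i; rewrite [X in (_ < X)%N]d0.
  by exists 1 => // v; rewrite /sqnorm qformE !big1 ?mulr0 // => i; case: (no_index i).
pose sphere := [set v : 'rV[R]_d | sqnorm v = 1]%classic.
have sphere0 : (sphere !=set0)%classic.
  exists (delta_mx 0 (Ordinal d_gt0)); rewrite /sphere /= /sqnorm (bigD1 (Ordinal d_gt0)) //=.
  rewrite mxE !eqxx expr1n big1 ?addr0 // => i /negbTE i0.
  by rewrite mxE i0 andbF expr0n.
have [c c1 cmin] := EVT_min_rV sphere0 (@compact_sqnorm_sphere d)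
  (continuous_subspaceT (@continuous_qform M)).
have c_sphere : sqnorm c = 1 by move: c1; rewrite inE.
have c0 : c != 0 by apply: contra_eq_neq c_sphere => ->; rewrite sqnorm0 eq_sym oner_neq0.
exists (qform M c); first exact: M_pd.
move=> v; have [->|v0] := eqVneq v 0.
  by rewrite sqnorm0 mulr0 /qform mul0mx mul0mx mxE.
have v_pos : 0 < sqnorm v.
  by rewrite lt_def sqnorm_ge0 andbT; apply: contra_neq v0 => /sqnorm_eq0.
(* minimise over the sphere at [v / |v|] *)
set s := Num.sqrt (sqnorm v).
have s_pos : 0 < s by rewrite sqrtr_gt0.
have s2 : s ^+ 2 = sqnorm v by rewrite sqr_sqrtr // ltW.
have u_sphere : s^-1 *: v \in sphere.
  by rewrite /sphere inE /= sqnormZ exprVn s2 mulVf // gt_eqF.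
have := cmin _ u_sphere; rewrite qformZ exprVn s2 => h.
by rewrite -ler_pdivlMr // mulrC.
Qed.

Lemma posdef_qform_invmx S : posdef S -> forall v, v != 0 -> 0 < qform (invmx S) v.
Proof.
move=> [St S_pos] v v0.
(* a singular [S] is its own [invmx] *)
have [S_unit|S_sing] := boolP (S \in unitmx); last by rewrite invmx_out ?inE //; exact: S_pos.
(* [v S^-1 v^T = z S z^T] with [z = v S^-1], using the symmetry of [S^-1] *)
set z := v *m invmx S.
have zS : z *m S = v by rewrite /z mulmxKV.
have z0 : z != 0 by apply: contraNneq v0 => z0; rewrite -zS z0 mul0mx.
have := S_pos z z0.
by rewrite zS /z trmx_mul trmx_inv St mulmxA.
Qed.

End quadratic_form.

Section iterated_integral.
Local Open Scope classical_set_scope.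

Lemma le_integral_pointwise d (T : measurableType d) (mu : {measure set T -> \bar R})
    (f g : T -> \bar R) :
  (forall x, f x <= g x)%E -> (\int[mu]_x f x <= \int[mu]_x g x)%E.
Proof.
move=> fg.
have fg' : {in [set: T], forall x, ((f \_ [set: T]) x <= (g \_ [set: T]) x)%E}.
  by move=> x _; rewrite /patch mem_set.
rewrite /integral; apply: leeB.
- apply: ereal_sup_le => _ [h /= hf <-]; exists h => //= x.
  exact: le_trans (hf x) (funepos_le fg' (in_setT x)).
- apply: ereal_sup_le => _ [h /= hf <-]; exists h => //= x.
  exact: le_trans (hf x) (funeneg_le fg' (in_setT x)).
Qed.

Lemma iint_le n (f g : 'rV[R]_n -> \bar R) :
  (forall x, f x <= g x)%E -> (iint f <= iint g)%E.
Proof.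
elim: n f g => [|n IH] f g fg /=; first exact: fg.
by apply: le_integral_pointwise => t; apply: IH.
Qed.

Lemma iint0 n : iint (fun _ : 'rV[R]_n => 0%E) = 0%E.
Proof. by elim: n => [|n IH] //=; rewrite IH integral0. Qed.

Lemma row_mx_const_ord0 n (t : R) (v : 'rV[R]_n) :
  row_mx (const_mx t : 'rV[R]_1) v 0 ord0 = t.
Proof.
have -> : ord0 = lshift n (ord0 : 'I_1) by apply: val_inj.
by rewrite row_mxEl mxE.
Qed.

Lemma row_mx_const_lift n (t : R) (v : 'rV[R]_n) (i : 'I_n) :
  row_mx (const_mx t : 'rV[R]_1) v 0 (lift ord0 i) = v 0 i.
Proof.
have -> : lift ord0 i = rshift 1 i by apply: val_inj.
by rewrite row_mxEr.
Qed.

Lemma iint_prod_density n (phi : R -> R) (c : R) :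
  (forall t, 0 <= phi t) -> measurable_fun [set: R] phi ->
  (\int[@lebesgue_measure R]_t (phi t)%:E = 1)%E -> 0 <= c ->
  iint (fun v : 'rV[R]_n => (c * \prod_(k < n) phi (v 0 k))%:E) = c%:E.
Proof.
move=> phi0 mphi iphi.
elim: n c => [|n IH] c c0 /=; first by rewrite big_ord0 mulr1.
transitivity (\int[@lebesgue_measure R]_t (c%:E * (phi t)%:E))%E; last first.
  rewrite ge0_integralZl_EFin ?iphi ?mule1 // => [x _|]; first by rewrite lee_fin.
  exact/measurable_realfun.measurable_EFinP.
apply: eq_integral => t _; rewrite -EFinM -(IH (c * phi t)) ?mulr_ge0 //.
congr iint; apply/funext => v; rewrite big_ord_recl row_mx_const_ord0 mulrA.
by congr (_ * _ * _)%:E; apply: eq_bigr => i _; rewrite row_mx_const_lift.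
Qed.

Lemma fine_between (x : \bar R) (lo hi : R) :
  (lo%:E <= x)%E -> (x <= hi%:E)%E -> lo <= fine x <= hi.
Proof. by case: x => [x||] //=; rewrite ?lee_fin ?leye_eq ?leeNy_eq // => -> ->. Qed.

End iterated_integral.

Section gaussian_integral.
Variable n : nat.

Definition gauss_mass (r : R) : R :=
  fine (iint (fun th : 'rV[R]_n => (expR (- (r * sqnorm th)))%:E)).

(* [peak r * expR (- r t^2)] is the density of [N(0, 1/(2r))] *)
Let peak (r : R) := normal_peak (Num.sqrt ((2 * r)^-1)).

Let iint_expR_sqnorm_peak (r c : R) : 0 < r -> 0 <= c ->
  iint (fun th : 'rV[R]_n => (c * expR (- (r * sqnorm th)))%:E) = (c * peak r ^- n)%:E.
Proof.
move=> r0 c0; set s := Num.sqrt ((2 * r)^-1).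
have s0 : 0 < s by rewrite sqrtr_gt0 invr_gt0 mulr_gt0.
have pk0 : 0 < peak r by apply: normal_peak_gt0; rewrite gt_eqF.
have phiE t : normal_pdf 0 s t = peak r * expR (- (r * t ^+ 2)).
  have ss : s ^+ 2 *+ 2 = r^-1.
    by rewrite sqr_sqrtr ?invr_ge0 ?mulr_ge0 ?ltW // -mulr_natl; field; rewrite gt_eqF.
  by rewrite normal_pdfE ?gt_eqF // /normal_fun subr0 ss invrK mulNr (mulrC (t ^+ 2)).
rewrite -(@iint_prod_density n (normal_pdf 0 s) (c * peak r ^- n)); first last.
- by rewrite mulr_ge0 // invr_ge0 exprn_ge0 // ltW.
- exact: integral_normal_pdf.
- exact: measurable_normal_pdf.
- by move=> t; exact: normal_pdf_ge0.
congr iint; apply/funext => th; congr (_%:E).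
rewrite (eq_bigr (fun k => peak r * expR (- (r * th 0 k ^+ 2)))) => [|k _]; last exact: phiE.
rewrite big_split /= prodr_const card_ord -expR_sum /sqnorm mulr_sumr -sumrN.
by rewrite mulrA divfK // expf_neq0 // gt_eqF.
Qed.

Let gauss_mass_peak r : 0 < r -> gauss_mass r = peak r ^- n.
Proof.
move=> r0; rewrite /gauss_mass (_ : (fun th => _) = fun th => (1 * expR (- (r * sqnorm th)))%:E).
  by rewrite iint_expR_sqnorm_peak // mul1r.
by apply/funext => th; rewrite mul1r.
Qed.

Lemma gauss_mass_gt0 r : 0 < r -> 0 < gauss_mass r.
Proof.
move=> r0; rewrite gauss_mass_peak // invr_gt0 exprn_gt0 //.
by apply: normal_peak_gt0; rewrite gt_eqF // sqrtr_gt0 invr_gt0 mulr_gt0.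
Qed.

Lemma iint_expR_sqnorm (r c : R) : 0 < r -> 0 <= c ->
  iint (fun th : 'rV[R]_n => (c * expR (- (r * sqnorm th)))%:E) = (c * gauss_mass r)%:E.
Proof. by move=> r0 c0; rewrite iint_expR_sqnorm_peak // gauss_mass_peak. Qed.

End gaussian_integral.

Lemma partial_lin_comb d m (F : 'I_m -> 'rV[R]_d -> R) (g : 'rV[R]_d -> R)
    (a : 'I_m -> R) (c : R) (j : 'I_d) (y : 'rV[R]_d) :
  (forall k, differentiable (F k) y) -> differentiable g y ->
  partial j (fun x => \sum_(k < m) a k * F k x + g x - c) y =
  \sum_(k < m) a k * partial j (F k) y + partial j g y.
Proof.
move=> dF dg; rewrite /partial.
have -> : (fun x => \sum_(k < m) a k * F k x + g x - c) =
    \sum_(k < m) (a k \*: F k) + g - cst c.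
  by apply/funext => x /=; rewrite fct_sumE.
have dFj k : derivable (F k) y (delta_mx 0 j) by exact: diff_derivable.
have dS : derivable (\sum_(k < m) (a k \*: F k)) y (delta_mx 0 j).
  by apply: derivable_sum => k; exact: derivableZ.
have dgj : derivable g y (delta_mx 0 j) by exact: diff_derivable.
rewrite (deriveB (derivableD dS dgj) (derivable_cst c _ _)) derive_cst subr0.
rewrite (deriveD dS dgj) derive_sum => [|k]; last exact: derivableZ.
by congr (_ + _); apply: eq_bigr => k _; rewrite deriveZ.
Qed.

Section nsm_quadratic.
Variables dX dT : nat.

(* the NSM summand of an exponential family at a fixed point, as a function of
   [theta]: W = w^2, D = grad T, Db = grad b, p = grad w^2, H and Hb the
   diagonal second derivatives of T and b *)
Definition nsm_quad (W : R) (D : 'I_dX -> 'I_dT -> R) (Db p : 'I_dX -> R)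
    (H : 'I_dX -> 'I_dT -> R) (Hb : 'I_dX -> R) (th : 'rV[R]_dT) : R :=
  W * (\sum_(j < dX) (\sum_(k < dT) th 0 k * D j k + Db j) ^+ 2)
  + 2 * (\sum_(j < dX) p j * (\sum_(k < dT) th 0 k * D j k + Db j))
  + 2 * W * (\sum_(j < dX) (\sum_(k < dT) th 0 k * H j k + Hb j)).

Lemma nsm_quad_sub0 W D Db p H Hb th :
  nsm_quad W D Db p H Hb th - nsm_quad W D Db p H Hb 0 =
  W * (\sum_(j < dX) (\sum_(k < dT) th 0 k * D j k) ^+ 2)
  + \sum_(j < dX) \sum_(k < dT) th 0 k *
      (2 * W * Db j * D j k + 2 * p j * D j k + 2 * W * H j k).
Proof.
have sum0 (F : 'I_dT -> R) : \sum_(k < dT) (0 : 'rV[R]_dT) 0 k * F k = 0.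
  by rewrite big1 // => k _; rewrite mxE mul0r.
rewrite /nsm_quad !mulr_sumr -!big_split /= -sumrB; apply: eq_bigr => j _.
rewrite (sum0 (D j)) (sum0 (H j)).
set L := \sum_(k < dT) th 0 k * D j k.
have -> : \sum_(k < dT) th 0 k * (2 * W * Db j * D j k + 2 * p j * D j k + 2 * W * H j k)
    = 2 * W * Db j * L + 2 * p j * L + 2 * W * (\sum_(k < dT) th 0 k * H j k).
  by rewrite /L !mulr_sumr -!big_split /=; apply: eq_bigr => k _; ring.
rewrite !add0r; ring.
Qed.

End nsm_quadratic.

Section nsm_term_quadratic.
Variables (dX dT : nat) (w : 'rV[R]_dX -> R) (T : 'rV[R]_dX -> 'rV[R]_dT)
  (b : 'rV[R]_dX -> R).
Hypothesis T_diff : forall k, twice_diff (Tcomp T k).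
Hypothesis b_diff : twice_diff b.

(* the normalising constant [ln Z(theta)] does not depend on [x] *)
Lemma partial_logq th j :
  partial j (logq T b th) =
  fun x => \sum_(k < dT) th 0 k * partial j (Tcomp T k) x + partial j b x.
Proof.
apply/funext => x.
have -> : logq T b th = fun z => \sum_(k < dT) th 0 k * Tcomp T k z + b z
                                - ln (fine (qnorm T b th)).
  by apply/funext => z; rewrite /logq /natpar; under eq_bigr do rewrite mulrC.
by rewrite partial_lin_comb // => [k|]; [case: (T_diff k)|case: b_diff].
Qed.

Lemma partial2_logq th j x :
  partial j (partial j (logq T b th)) x =
  \sum_(k < dT) th 0 k * partial j (partial j (Tcomp T k)) x + partial j (partial j b) x.
Proof.
rewrite partial_logq (_ : (fun x => _) =
  fun x => \sum_(k < dT) th 0 k * partial j (Tcomp T k) x + partial j b x - 0).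
  by rewrite partial_lin_comb // => [k|]; [case: (T_diff k)|case: b_diff].
by apply/funext => z; rewrite subr0.
Qed.

Lemma nsm_termE th y :
  nsm_term w T b th y =
  nsm_quad (w y ^+ 2) (fun j k => partial j (Tcomp T k) y) (fun j => partial j b y)
    (fun j => partial j (fun x => w x ^+ 2) y)
    (fun j k => partial j (partial j (Tcomp T k)) y) (fun j => partial j (partial j b) y) th.
Proof.
rewrite /nsm_term /= /nsm_quad /grad_norm /laplacian sqr_sqrtr; last first.
  by apply: sumr_ge0 => j _; exact: sqr_ge0.
by congr (_ * _ + 2 * _ + _ * _); apply: eq_bigr => j _;
  rewrite ?partial2_logq ?partial_logq.
Qed.

End nsm_term_quadratic.

Section derivative_bounds.
Variables (dX dT : nat) (T : 'rV[R]_dX -> 'rV[R]_dT).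

Lemma partial_le_grad_norm (f : 'rV[R]_dX -> R) y j : `|partial j f y| <= grad_norm f y.
Proof.
by apply: normr_le_sqrt; exact: (ler_term_sum (F := fun l => partial l f y ^+ 2) j
  (fun _ => sqr_ge0 _)).
Qed.

Lemma partialT_le_frob y j k : `|partial j (Tcomp T k) y| <= frob_gradT T y.
Proof.
apply/normr_le_sqrt/(le_trans _ (ler_term_sum k _)) => [|k'].
  exact: (ler_term_sum (F := fun l => partial l (Tcomp T k) y ^+ 2) j (fun _ => sqr_ge0 _)).
by apply: sumr_ge0 => l _; exact: sqr_ge0.
Qed.

Lemma partial2T_le_frob_hess y j k :
  `|partial j (partial j (Tcomp T k)) y| <= frob_hessT T y.
Proof.
apply/normr_le_sqrt/(le_trans _ (ler_term_sum k _)) => [|k']; last first.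
  by do 2!apply: sumr_ge0 => ? _; exact: sqr_ge0.
apply: le_trans (ler_term_sum j _) => [|l]; last first.
  by apply: sumr_ge0 => m _; exact: sqr_ge0.
exact: (ler_term_sum (F := fun m => partial m (partial j (Tcomp T k)) y ^+ 2) j
  (fun _ => sqr_ge0 _)).
Qed.

End derivative_bounds.

Section nsm_excess_bounds.
Variables (dX dT : nat) (w : 'rV[R]_dX -> R) (T : 'rV[R]_dX -> 'rV[R]_dT)
  (b : 'rV[R]_dX -> R) (C C' : R).
Hypothesis w_ge0 : forall x, 0 <= w x.
Hypothesis A5_w : forall x, 0 < w x ->
  Num.max (Num.max (Num.sqrt (frob_gradT T x * grad_norm b x))
                   (Num.sqrt (frob_hessT T x)))
          (frob_gradT T x)
  <= C / w x.
Hypothesis A5_grad_w2 : forall x, 0 < grad_norm (fun y => w y ^+ 2) x ->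
  frob_gradT T x <= C' / grad_norm (fun y => w y ^+ 2) x.
Hypothesis T_diff : forall k, twice_diff (Tcomp T k).
Hypothesis b_diff : twice_diff b.

Definition nsm_excess y th := nsm_term w T b th y - nsm_term w T b 0 y.

Definition excess_quad_const := dX%:R * dT%:R * C ^+ 2.

Lemma excess_quad_const_ge0 : 0 <= excess_quad_const.
Proof. by rewrite mulr_ge0 // sqr_ge0. Qed.

Definition excess_lin_const := dX%:R * (4 * C ^+ 2 + 2 * `|C'|).

Lemma excess_lin_const_ge0 : 0 <= excess_lin_const.
Proof. by rewrite mulr_ge0 // addr_ge0 // mulr_ge0 // sqr_ge0. Qed.

Definition excess_const (e : R) := dT%:R * (excess_lin_const ^+ 2 / e).

Let w2_mul_le y X : 0 <= X -> (0 < w y -> Num.sqrt X <= C / w y) ->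
  w y ^+ 2 * X <= C ^+ 2.
Proof.
move=> X0 hX; have [w0|w_neq0] := eqVneq (w y) 0.
  by rewrite w0 expr0n mul0r sqr_ge0.
have wy_gt0 : 0 < w y by rewrite lt_def w_neq0 w_ge0.
exact: sqrt_le_div_sqr X0 wy_gt0 (hX wy_gt0).
Qed.

Lemma w2_gradT_gradb_le y : w y ^+ 2 * (frob_gradT T y * grad_norm b y) <= C ^+ 2.
Proof.
apply: w2_mul_le => [|wy]; first by rewrite mulr_ge0 ?sqrtr_ge0.
by apply: le_trans (A5_w wy); rewrite !le_max lexx.
Qed.

Lemma w2_hessT_le y : w y ^+ 2 * frob_hessT T y <= C ^+ 2.
Proof.
apply: w2_mul_le => [|wy]; first exact: sqrtr_ge0.
by apply: le_trans (A5_w wy); rewrite !le_max lexx orbT.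
Qed.

Lemma w2_gradT2_le y : w y ^+ 2 * frob_gradT T y ^+ 2 <= C ^+ 2.
Proof.
apply: w2_mul_le => [|wy]; first exact: sqr_ge0.
rewrite sqrtr_sqr ger0_norm ?sqrtr_ge0 //.
by apply: le_trans (A5_w wy); rewrite !le_max lexx !orbT.
Qed.

Lemma grad_w2_gradT_le y :
  grad_norm (fun x => w x ^+ 2) y * frob_gradT T y <= `|C'|.
Proof.
have [g0|g_gt0] := eqVneq (grad_norm (fun x => w x ^+ 2) y) 0; first by rewrite g0 mul0r.
have {}g_gt0 : 0 < grad_norm (fun x => w x ^+ 2) y by rewrite lt_def g_gt0 sqrtr_ge0.
rewrite mulrC -ler_pdivlMr //; apply: le_trans (A5_grad_w2 g_gt0) _.
by rewrite ler_pM2r ?invr_gt0 // ler_norm.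
Qed.

Lemma nsm_coef_le y j k :
  `|2 * w y ^+ 2 * partial j b y * partial j (Tcomp T k) y
    + 2 * partial j (fun x => w x ^+ 2) y * partial j (Tcomp T k) y
    + 2 * w y ^+ 2 * partial j (partial j (Tcomp T k)) y|
  <= 4 * C ^+ 2 + 2 * `|C'|.
Proof.
have hD := partialT_le_frob T y j k; have hDb := partial_le_grad_norm b y j.
have hP := partial_le_grad_norm (fun x => w x ^+ 2) y j.
have hH := partial2T_le_frob_hess T y j k.
have W0 : 0 <= w y ^+ 2 := sqr_ge0 _.
have e1 : `|2 * w y ^+ 2 * partial j b y * partial j (Tcomp T k) y| <= 2 * C ^+ 2.
  move: (w y ^+ 2) W0 (w2_gradT_gradb_le y) => W W0 hW.
  rewrite -!mulrA normrM (ger0_norm (ler0n _ 2)) normrM (ger0_norm W0) normrM.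
  have := ler_wpM2l W0 (ler_pM (normr_ge0 _) (normr_ge0 _) hDb hD); nra.
have e2 : `|2 * partial j (fun x => w x ^+ 2) y * partial j (Tcomp T k) y| <= 2 * `|C'|.
  rewrite -mulrA normrM (ger0_norm (ler0n _ 2)) normrM.
  have := ler_pM (normr_ge0 _) (normr_ge0 _) hP hD.
  have := grad_w2_gradT_le y; nra.
have e3 : `|2 * w y ^+ 2 * partial j (partial j (Tcomp T k)) y| <= 2 * C ^+ 2.
  move: (w y ^+ 2) W0 (w2_hessT_le y) => W W0 hW.
  rewrite -mulrA normrM (ger0_norm (ler0n _ 2)) normrM (ger0_norm W0).
  have := ler_wpM2l W0 hH; nra.
apply: le_trans (ler_normD _ _) _; apply: le_trans (lerD (ler_normD _ _) (lexx _)) _.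
lra.
Qed.

Lemma nsm_quad_part_le y (th : 'rV[R]_dT) :
  w y ^+ 2 * (\sum_(j < dX) (\sum_(k < dT) th 0 k * partial j (Tcomp T k) y) ^+ 2)
  <= excess_quad_const * sqnorm th.
Proof.
set F := frob_gradT T y; set N := sqnorm th.
have F0 : 0 <= F := sqrtr_ge0 _.
have row_le j : (\sum_(k < dT) th 0 k * partial j (Tcomp T k) y) ^+ 2 <= dT%:R * F ^+ 2 * N.
  have h1 : `|\sum_(k < dT) th 0 k * partial j (Tcomp T k) y| <= F * \sum_(k < dT) `|th 0 k|.
    rewrite mulr_sumr; apply: le_trans (ler_norm_sum _ _ _) (ler_sum _ _) => k _.
    by rewrite normrM mulrC; apply: ler_wpM2r => //; exact: partialT_le_frob.
  have h2 : (\sum_(k < dT) `|th 0 k|) ^+ 2 <= dT%:R * N.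
    have -> : N = \sum_(k < dT) `|th 0 k| ^+ 2.
      by apply: eq_bigr => k _; rewrite real_normK ?num_real.
    exact: sqr_sum_le.
  rewrite -real_normK ?num_real //.
  apply: (@le_trans _ _ ((F * \sum_(k < dT) `|th 0 k|) ^+ 2)).
    by rewrite ler_sqr ?nnegrE ?mulr_ge0 // sumr_ge0.
  rewrite exprMn [leRHS]mulrAC [leRHS]mulrC.
  by apply: ler_wpM2l; [exact: sqr_ge0|exact: h2].
have rows_le : \sum_(j < dX) (\sum_(k < dT) th 0 k * partial j (Tcomp T k) y) ^+ 2
    <= dX%:R * (dT%:R * F ^+ 2 * N).
  apply: le_trans (ler_sum _ (fun j _ => row_le j)) _.
  by rewrite sumr_const card_ord [leRHS]mulr_natl.
have W0 : 0 <= w y ^+ 2 := sqr_ge0 _.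
have := ler_wpM2l W0 rows_le; have := w2_gradT2_le y.
have : 0 <= dX%:R * dT%:R * N :> R by rewrite !mulr_ge0 ?sqnorm_ge0.
rewrite /excess_quad_const -/F; nra.
Qed.

Lemma nsm_excess_split y th : exists Q Lin,
  [/\ nsm_excess y th = Q + Lin, 0 <= Q, Q <= excess_quad_const * sqnorm th &
      `|Lin| <= excess_lin_const * \sum_(k < dT) `|th 0 k|].
Proof.
rewrite /nsm_excess /excess_lin_const !nsm_termE // nsm_quad_sub0.
eexists; eexists; split; first reflexivity.
- by rewrite mulr_ge0 ?sqr_ge0 // sumr_ge0 // => j _; exact: sqr_ge0.
- exact: nsm_quad_part_le.
apply: le_trans (ler_norm_sum _ _ _) _.
rewrite (_ : dX%:R * (4 * C ^+ 2 + 2 * `|C'|) * \sum_(k < dT) `|th 0 k| =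
             \sum_(j < dX) ((4 * C ^+ 2 + 2 * `|C'|) * \sum_(k < dT) `|th 0 k|));
  last by rewrite sumr_const card_ord -mulr_natl; ring.
apply: ler_sum => j _; rewrite mulr_sumr; apply: le_trans (ler_norm_sum _ _ _) _.
apply: ler_sum => k _; rewrite normrM mulrC; apply: ler_wpM2r => //.
exact: nsm_coef_le.
Qed.

Lemma nsm_excess_ge y th e : 0 < e ->
  - (e * sqnorm th + excess_const e) <= nsm_excess y th.
Proof.
move=> e0; have [Q [Lin [-> Q0 _ LinK]]] := nsm_excess_split y th.
have := young_sum_norm th excess_lin_const_ge0 e0.
have := ler_norm (- Lin); rewrite normrN.
rewrite /excess_const; lra.
Qed.

Lemma nsm_excess_le y th e : 0 < e ->
  nsm_excess y th <= (excess_quad_const + e) * sqnorm th + excess_const e.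
Proof.
move=> e0; have [Q [Lin [-> _ QK LinK]]] := nsm_excess_split y th.
have := young_sum_norm th excess_lin_const_ge0 e0; have := ler_norm Lin.
rewrite /excess_const; lra.
Qed.

End nsm_excess_bounds.

Lemma sum_replace_at n d (F : 'rV[R]_d -> R) (xs : 'I_n -> 'rV[R]_d) j xc :
  \sum_(i < n) F (replace_at xs j xc i) - \sum_(i < n) F (xs i) = F xc - F (xs j).
Proof.
rewrite (bigD1 j) //= [X in _ - X](bigD1 j) //= /replace_at eqxx.
rewrite (eq_bigr (fun i => F (xs i))) => [|i /negbTE -> //]; ring.
Qed.

Definition gauss_const d (S : 'M[R]_d) : R := (Num.sqrt ((2 * pi) ^+ d * \det S))^-1.

Lemma gauss_const_ge0 d (S : 'M[R]_d) : 0 <= gauss_const S.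
Proof. by rewrite invr_ge0 sqrtr_ge0. Qed.

Lemma gauss_pdfE d (mu : 'rV[R]_d) S th :
  gauss_pdf mu S th = gauss_const S * expR (- (2^-1 * qform (invmx S) (th - mu))).
Proof. by rewrite /gauss_pdf mulNr. Qed.

Section posterior.
Variables (dX dT n : nat) (beta : R) (mu : 'rV[R]_dT) (Sigma : 'M[R]_dT)
  (w : 'rV[R]_dX -> R) (T : 'rV[R]_dX -> 'rV[R]_dT) (b : 'rV[R]_dX -> R) (C C' : R).
Hypothesis n_gt0 : (0 < n)%N.
Hypothesis beta_gt0 : 0 < beta.
Hypothesis Sigma_pd : posdef Sigma.
Hypothesis w_ge0 : forall x, 0 <= w x.
Hypothesis A5_w : forall x, 0 < w x ->
  Num.max (Num.max (Num.sqrt (frob_gradT T x * grad_norm b x))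
                   (Num.sqrt (frob_hessT T x)))
          (frob_gradT T x)
  <= C / w x.
Hypothesis A5_grad_w2 : forall x, 0 < grad_norm (fun y => w y ^+ 2) x ->
  frob_gradT T x <= C' / grad_norm (fun y => w y ^+ 2) x.
Hypothesis T_diff : forall k, twice_diff (Tcomp T k).
Hypothesis b_diff : twice_diff b.

Implicit Types (xs ys zs : 'I_n -> 'rV[R]_dX) (th : 'rV[R]_dT).

Local Notation pi_post := (pi_NSM beta mu Sigma w T b).
Local Notation excess := (nsm_excess w T b).
Local Notation KQ := (excess_quad_const dX dT C).
Local Notation Ke := (excess_const dX dT C C').

Definition base_sum (ys : 'I_n -> 'rV[R]_dX) : R := \sum_(i < n) nsm_term w T b 0 (ys i).

Definition excess_sum (ys : 'I_n -> 'rV[R]_dX) th : R := \sum_(i < n) excess (ys i) th.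

Definition post_scale ys : R := expR (- (beta * base_sum ys)).

(* the posterior density up to the data-dependent factor [post_scale] *)
Definition post_shape ys th : R :=
  gauss_const Sigma * expR (- (beta * excess_sum ys th) - 2^-1 * qform (invmx Sigma) (th - mu)).

Definition post_norm ys : R :=
  fine (iint (fun th => (post_unnorm beta mu Sigma w T b ys th)%:E)) / post_scale ys.

Lemma post_unnormE ys th :
  post_unnorm beta mu Sigma w T b ys th = post_scale ys * post_shape ys th.
Proof.
rewrite /post_unnorm /L_NSM gauss_pdfE.
rewrite (_ : \sum_(i < n) _ = base_sum ys + excess_sum ys th); last first.
  by rewrite -big_split; apply: eq_bigr => i _; rewrite /= /nsm_excess addrC subrK.
rewrite /post_scale /post_shape; move: (base_sum ys) (excess_sum ys th) => Y X.
have n0 : n%:R != 0 :> R by rewrite pnatr_eq0 -lt0n.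
rewrite (_ : beta * n%:R * (n%:R^-1 * (Y + X)) = beta * Y + beta * X); last by field.
by rewrite opprD !expRD; ring.
Qed.

Lemma pi_NSME ys th : pi_post ys th = post_shape ys th / post_norm ys.
Proof.
rewrite /pi_NSM post_unnormE /post_norm invf_div; move: (fine _) => Z.
by rewrite mulrAC mulrC.
Qed.

Lemma KL_gauss_const0 xs ys :
  gauss_const Sigma = 0 -> KL (pi_post xs) (pi_post ys) = 0%E.
Proof.
move=> c0; have pi0 zs th : pi_post zs th = 0.
  by rewrite pi_NSME /post_shape c0 !mul0r.
rewrite /KL -(iint0 dT); congr iint; apply/funext => th.
by rewrite !pi0 mul0r.
Qed.

Lemma post_shape_le : exists2 r, 0 < r &
  exists A, forall ys th, post_shape ys th <= A * expR (- (r * sqnorm th)).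
Proof.
have [lam lam_gt0 lam_le] := qform_ge_sqnorm (posdef_qform_invmx Sigma_pd).
have nR : 0 < n%:R :> R by rewrite ltr0n.
(* choose [e] so that the data term costs at most [lam / 8] of the prior's decay *)
pose e := lam / (8 * (beta * n%:R)).
have e_gt0 : 0 < e by rewrite divr_gt0 // !mulr_gt0.
have be : beta * n%:R * e = lam / 8 by rewrite /e; field; rewrite !gt_eqF.
exists (lam / 8); first by rewrite divr_gt0.
exists (gauss_const Sigma * expR (beta * n%:R * Ke e + lam / 2 * sqnorm mu)) => ys th.
rewrite /post_shape -mulrA; apply: ler_wpM2l; first exact: gauss_const_ge0.
rewrite -expRD ler_expR.
have sum_ge : - (n%:R * (e * sqnorm th + Ke e)) <= excess_sum ys th.
  rewrite /excess_sum (_ : - _ = \sum_(i < n) - (e * sqnorm th + Ke e)).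
    by apply: ler_sum => i _; exact: nsm_excess_ge.
  by rewrite sumr_const card_ord mulNrn mulr_natl.
have := ler_wpM2l (ltW beta_gt0) sum_ge; have := lam_le (th - mu).
have := ler_wpM2l (ltW lam_gt0) (sqnorm_le_sqnormB th mu).
have : beta * n%:R * e * sqnorm th = lam / 8 * sqnorm th by rewrite be.
lra.
Qed.

Lemma post_shape_ge : 0 < gauss_const Sigma -> exists2 r, 0 < r &
  exists2 B, 0 < B & forall ys th, B * expR (- (r * sqnorm th)) <= post_shape ys th.
Proof.
move=> c0; pose m := \sum_(j < dT) \sum_(i < dT) `|invmx Sigma i j|.
have m0 : 0 <= m by do 2!apply: sumr_ge0 => ? _.
have KQ0 := excess_quad_const_ge0 dX dT C.
have bnK : 0 <= beta * n%:R * (KQ + 1) by rewrite !mulr_ge0 ?addr_ge0 // ltW.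
exists (beta * n%:R * (KQ + 1) + m + 1); first by rewrite ltr_pwDr // addr_ge0.
exists (gauss_const Sigma * expR (- (beta * n%:R * Ke 1 + m * sqnorm mu))).
  by rewrite mulr_gt0 ?expR_gt0.
move=> ys th; rewrite /post_shape -(mulrA (gauss_const Sigma)); apply: ler_wpM2l; first exact: ltW.
rewrite -expRD ler_expR.
have sum_le : excess_sum ys th <= n%:R * ((KQ + 1) * sqnorm th + Ke 1).
  rewrite /excess_sum (_ : _ * _ = \sum_(i < n) ((KQ + 1) * sqnorm th + Ke 1)).
    by apply: ler_sum => i _; exact: nsm_excess_le.
  by rewrite sumr_const card_ord mulr_natl.
have := ler_wpM2l (ltW beta_gt0) sum_le; have := qform_le_sqnorm (invmx Sigma) (th - mu).
have := ler_wpM2l m0 (sqnormB_le th mu); have := sqnorm_ge0 th.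
rewrite -/m; nra.
Qed.

Section envelope.
Variables (r A r' B : R).
Hypotheses (r_gt0 : 0 < r) (r'_gt0 : 0 < r') (B_gt0 : 0 < B).
Hypothesis shape_le : forall ys th, post_shape ys th <= A * expR (- (r * sqnorm th)).
Hypothesis shape_ge : forall ys th, B * expR (- (r' * sqnorm th)) <= post_shape ys th.

Local Notation P := (gauss_mass dT r).
Local Notation P' := (gauss_mass dT r').

Lemma post_shape_gt0 ys th : 0 < post_shape ys th.
Proof. exact: lt_le_trans (mulr_gt0 B_gt0 (expR_gt0 _)) (shape_ge ys th). Qed.

Lemma envelope_ge0 : 0 <= A.
Proof.
have := lt_le_trans (post_shape_gt0 (fun=> 0) 0) (shape_le (fun=> 0) 0).
by rewrite pmulr_lgt0 ?expR_gt0 // => /ltW.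
Qed.

Lemma post_norm_bounds ys : B * P' <= post_norm ys <= A * P.
Proof.
have s0 : 0 < post_scale ys := expR_gt0 _.
rewrite /post_norm ler_pdivlMr // ler_pdivrMr //.
rewrite [B * P' * _]mulrAC [A * P * _]mulrAC !(mulrC _ (post_scale ys)).
apply: fine_between.
- rewrite -(iint_expR_sqnorm _ r'_gt0); last by rewrite mulr_ge0 // ltW.
  apply: iint_le => th; rewrite lee_fin post_unnormE -(mulrA (post_scale ys)).
  by apply: ler_wpM2l; [exact: ltW|exact: shape_ge].
- rewrite -(iint_expR_sqnorm _ r_gt0); last by rewrite mulr_ge0 ?envelope_ge0 // ltW.
  apply: iint_le => th; rewrite lee_fin post_unnormE -(mulrA (post_scale ys)).
  by apply: ler_wpM2l; [exact: ltW|exact: shape_le].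
Qed.

Lemma post_norm_gt0 ys : 0 < post_norm ys.
Proof.
apply: lt_le_trans (andP (post_norm_bounds ys)).1.
by rewrite mulr_gt0 ?gauss_mass_gt0.
Qed.

Lemma pi_NSM_le ys th : pi_post ys th <= A / (B * P') * expR (- (r * sqnorm th)).
Proof.
have BP_gt0 : 0 < B * P' by rewrite mulr_gt0 ?gauss_mass_gt0.
have Z_ge : 1 <= post_norm ys / (B * P').
  by rewrite ler_pdivlMr // mul1r (andP (post_norm_bounds ys)).1.
rewrite pi_NSME ler_pdivrMr ?post_norm_gt0 //.
rewrite (_ : A / (B * P') * expR (- (r * sqnorm th)) * post_norm ys =
             A * expR (- (r * sqnorm th)) * (post_norm ys / (B * P'))); last first.
  by move: (expR _) (post_norm ys) => E Z; ring.
apply: le_trans (shape_le ys th) _; rewrite -[leLHS]mulr1.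
by apply: ler_wpM2l => //; rewrite mulr_ge0 ?envelope_ge0 ?expR_ge0.
Qed.

Lemma post_shape_replace xs j xc th :
  post_shape xs th / post_shape (replace_at xs j xc) th =
  expR (beta * (excess xc th - excess (xs j) th)).
Proof.
have c0 : gauss_const Sigma != 0.
  by apply: contraTneq (post_shape_gt0 xs th) => c0; rewrite /post_shape c0 mul0r ltxx.
have hsum : excess_sum (replace_at xs j xc) th - excess_sum xs th =
    excess xc th - excess (xs j) th := sum_replace_at (fun y => excess y th) xs j xc.
rewrite /post_shape invfM mulrACA mulfV // mul1r -expRN -expRD -hsum.
congr expR; move: (excess_sum xs th) (excess_sum _ th) (qform _ _) => X Y q.
ring.
Qed.

Lemma ln_pi_ratio_le xs j xc th :
  ln (pi_post xs th / pi_post (replace_at xs j xc) th) <=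
  beta * (KQ + 2) * sqnorm th + (2 * beta * Ke 1 + ln (A * P) - ln (B * P')).
Proof.
set ys := replace_at xs j xc.
have [Zo_ge _] := andP (post_norm_bounds xs).
have [_ Zc_le] := andP (post_norm_bounds ys).
have Zo := post_norm_gt0 xs; have Zc := post_norm_gt0 ys.
have BP_gt0 : 0 < B * P' := mulr_gt0 B_gt0 (gauss_mass_gt0 dT r'_gt0).
have lnZ : ln (post_norm ys) - ln (post_norm xs) <= ln (A * P) - ln (B * P').
  apply: lerB; rewrite ler_ln ?posrE.
  - exact: Zc_le.
  - exact: Zc.
  - exact: lt_le_trans Zc Zc_le.
  - exact: Zo_ge.
  - exact: BP_gt0.
  - exact: Zo.
have ratio_pos : 0 < post_norm ys / post_norm xs := divr_gt0 Zc Zo.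
rewrite !pi_NSME (_ : _ / _ / _ =
    post_shape xs th / post_shape ys th * (post_norm ys / post_norm xs)); last first.
  move: (post_shape xs th) (post_shape ys th) (post_shape_gt0 ys th) Zo Zc.
  move: (post_norm xs) (post_norm ys) => zo zc g h h0 zo0 zc0.
  by field; rewrite !gt_eqF.
rewrite post_shape_replace (lnM (expR_gt0 _) ratio_pos) expRK (ln_div Zc Zo).
have hc : excess xc th <= (KQ + 1) * sqnorm th + Ke 1 by apply: nsm_excess_le.
have ho : - (1 * sqnorm th + Ke 1) <= excess (xs j) th by apply: nsm_excess_ge.
apply: le_trans (lerD (ler_wpM2l (ltW beta_gt0) (lerB hc ho)) lnZ) _.
rewrite le_eqVlt; apply/orP; left; apply/eqP; ring.
Qed.

Lemma KL_integrand_le xs j xc th :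
  pi_post xs th * ln (pi_post xs th / pi_post (replace_at xs j xc) th) <=
  A / (B * P') * (2 * (beta * (KQ + 2)) / r +
                  `|2 * beta * Ke 1 + ln (A * P) - ln (B * P')|) *
  expR (- (r / 2 * sqnorm th)).
Proof.
apply: mul_le_expR_tail.
- by rewrite pi_NSME; exact: divr_ge0 (ltW (post_shape_gt0 _ _)) (ltW (post_norm_gt0 _)).
- exact: pi_NSM_le.
- exact: ln_pi_ratio_le.
- exact: mulr_ge0 (ltW beta_gt0) (addr_ge0 (excess_quad_const_ge0 _ _ _) (ler0n _ 2)).
- exact: sqnorm_ge0.
- exact: r_gt0.
Qed.

Lemma KL_replace_le xs j : exists K, forall xc,
  (KL (pi_post xs) (pi_post (replace_at xs j xc)) <= K%:E)%E.
Proof.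
have r2 : 0 < r / 2 by rewrite divr_gt0.
pose c := A / (B * P') *
  (2 * (beta * (KQ + 2)) / r + `|2 * beta * Ke 1 + ln (A * P) - ln (B * P')|).
have c0 : 0 <= c.
  apply: mulr_ge0.
    exact: divr_ge0 envelope_ge0 (ltW (mulr_gt0 B_gt0 (gauss_mass_gt0 dT r'_gt0))).
  apply: addr_ge0 (normr_ge0 _); apply: divr_ge0 (ltW r_gt0).
  exact: mulr_ge0 (ler0n _ 2)
    (mulr_ge0 (ltW beta_gt0) (addr_ge0 (excess_quad_const_ge0 _ _ _) (ler0n _ 2))).
exists (c * gauss_mass dT (r / 2)) => xc.
rewrite /KL -(iint_expR_sqnorm _ r2 c0); apply: iint_le => th; rewrite lee_fin.
exact: KL_integrand_le.
Qed.

End envelope.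

Lemma KL_replace_bounded xs j : 0 < gauss_const Sigma -> exists K, forall xc,
  (KL (pi_post xs) (pi_post (replace_at xs j xc)) <= K%:E)%E.
Proof.
move=> c0; have [r r_gt0 [A shape_le]] := post_shape_le.
have [r' r'_gt0 [B B_gt0 shape_ge]] := post_shape_ge c0.
exact: KL_replace_le r_gt0 r'_gt0 B_gt0 shape_le shape_ge xs j.
Qed.

End posterior.

End NSM_posterior_stability.

Theorem theorem4p6 (R : realType) (dX dT n : nat) (beta : R)
  (xo : 'I_n -> 'rV[R]_dX) (mu : 'rV[R]_dT) (Sigma : 'M[R]_dT)
  (w : 'rV[R]_dX -> R) (T : 'rV[R]_dX -> 'rV[R]_dT) (b : 'rV[R]_dX -> R)
  (j : 'I_n) :
  0 < beta ->
  posdef Sigma ->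
  (* (A1) *)
  (forall x, 0 <= w x) ->
  C2 w ->
  (exists M : R, forall x, w x <= M) ->
  (exists M : R, forall x, grad_norm w x <= M) ->
  (* (A3) *)
  (forall k, twice_diff (Tcomp T k)) ->
  twice_diff b ->
  (forall theta, (qnorm T b theta < +oo)%E) ->
  (* (A5) *)
  (exists C C' : R,
     (forall x, 0 < w x ->
        Num.max (Num.max (Num.sqrt (frob_gradT T x * grad_norm b x))
                         (Num.sqrt (frob_hessT T x)))
                (frob_gradT T x)
        <= C / w x) /\
     (forall x, 0 < grad_norm (fun y => w y ^+ 2) x ->
        frob_gradT T x <= C' / grad_norm (fun y => w y ^+ 2) x)) ->
  (ereal_sup [set KL (pi_NSM beta mu Sigma w T b xo)
                     (pi_NSM beta mu Sigma w T b (replace_at xo j xc))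
             | xc in [set: 'rV[R]_dX]] < +oo)%E.
Proof.
move=> beta_gt0 Sigma_pd w_ge0 _ _ _ T_diff b_diff _ [C [C' [A5_w A5_grad_w2]]].
(* Only nonnegativity of [w], (A5) and the differentiability in (A3) are used.
   [gauss_const Sigma > 0] holds for positive definite [Sigma], but its degenerate
   value [0] (both posteriors vanish) is cheaper to treat than [\det Sigma > 0]. *)
have n_gt0 : (0 < n)%N := leq_ltn_trans (leq0n j) (ltn_ord j).
have [K KL_le] : exists K : R, forall xc,
    (KL (pi_NSM beta mu Sigma w T b xo)
        (pi_NSM beta mu Sigma w T b (replace_at xo j xc)) <= K%:E)%E.
  have [c0|c0_neq0] := eqVneq (gauss_const Sigma) 0.
    by exists 0 => xc; rewrite (KL_gauss_const0 beta mu w T b n_gt0 _ _ c0).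
  have c0_gt0 : 0 < gauss_const Sigma by rewrite lt_def c0_neq0 gauss_const_ge0.
  exact: (KL_replace_bounded mu n_gt0 beta_gt0 Sigma_pd w_ge0 A5_w A5_grad_w2 T_diff b_diff
    xo j c0_gt0).
apply: le_lt_trans (ltry K); apply: ge_ereal_sup => _ [xc _ <-]; exact: KL_le.
Qed.
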